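(* Let $\bar{\mathcal F}=\{\bar a^1,\bar b^1,\bar c^1,\bar d^1\}$ be the quadrangle of $Q$ with $\bar a^1=[1,0,0,0,0,0]$, $\bar b^1=[0,0,1,0,0,0]$, $\bar c^1=[0,1,0,0,0,0]$, $\bar d^1=[0,0,0,1,0,0]$ (so $\bar a^1\perp\bar b^1\perp\bar c^1\perp\bar d^1\perp\bar a^1$). Then $$I(\bar{\mathcal F})=\{[u,1/u,v,1/v,r,s]:\ u,v\in\mathbb F_q,\ uv\neq0,\ r,s\in\mathbb F_q,\ r^2+rs+\lambda s^2=1\},$$ and $|I(\bar{\mathcal F})|=(q-1)^2(q+1)$.
   Context: Let $q=2^n$, $V=V(6,q)$, and let $Q=Q^-(5,q)$ be the quadric of $\mathrm{PG}(V)$ with equation $f(x)=0$, where $f(x_1,\dots,x_6)=x_1x_2+x_3x_4+x_5^2+x_5x_6+\lambda x_6^2$ with $\lambda\in\mathbb F_q$, $\mathrm{Tr}(\lambda)=1$ ($\mathrm{Tr}$ the absolute trace $\mathbb F_q\to\mathbb F_2$). $Q$ is a generalized quadrangle of order $(q,q^2)$ whose lines are the totally singular lines. $\perp$ denotes orthogonality w.r.t. the bilinear form $\beta(x,y)=f(x+y)-f(x)-f(y)$; two distinct points of $Q$ are collinear in $Q$ iff they are orthogonal. A quadrangle of $Q$ is a set of four distinct points $a,b,c,d$ of $Q$ with $a\perp b\perp c\perp d\perp a$, $a\not\perp c$, $b\not\perp d$. For a point $p\notin Q$, a centric cube of $Q$ with center $p$ is a set of eight points $\{x_i^a: i=1,\dots,4,\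 a=1,2\}$ of $Q\setminus p^\perp$ such that $x_i^a$ and $x_j^b$ are collinear in $Q$ iff $i\neq j$ and $a\neq b$, and such that for each $i$ the points $p,x_i^1,x_i^2$ lie on a common projective line; the pairs $\{x_i^1,x_i^2\}$ are called opposite. A face of such a cube is a set of four of its points, one from each opposite pair, whose induced collinearity graph is a $4$-cycle. For a quadrangle $\mathcal F$ of $Q$, $I(\mathcal F)$ is the set of points $p\in\mathrm{PG}(V)\setminus Q$ with $p^\perp\cap\mathcal F=\emptyset$ such that $\mathcal F$ is a face of some centric cube of $Q$ with center $p$. *)

From HB Require Import structures.
From mathcomp Require Import all_boot all_order all_algebra all_fingroup all_field.
Set Implicit Arguments. Unset Strict Implicit. Unset Printing Implicit Defensive.
Import GRing.Theory.
Local Open Scope ring_scope.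

Section Quadric.
Variable F : finFieldType.

Notation vec := 'rV[F]_6.

(* coordinates x_1..x_6 are x (k-1) for k = 1..6 *)
Definition co (x : vec) (k : nat) : F := x ord0 (inord k).

Definition mkv (x1 x2 x3 x4 x5 x6 : F) : vec :=
  \row_(i < 6) [:: x1; x2; x3; x4; x5; x6]`_i.

(* absolute trace F_{2^n} -> F_2, as an element of F *)
Definition trace (n : nat) (l : F) : F := \sum_(i < n) l ^+ (2 ^ i).

Definition qf (lam : F) (x : vec) : F :=
  co x 0 * co x 1 + co x 2 * co x 3 + co x 4 ^+ 2 + co x 4 * co x 5
  + lam * co x 5 ^+ 2.

Definition bf (lam : F) (x y : vec) : F := qf lam (x + y) - qf lam x - qf lam y.

(* the projective point [x] (for x != 0): the set of nonzero multiples of x *)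
Definition pclass (x : vec) : {set vec} :=
  [set y : vec | [exists c : F, (c != 0) && (y == c *: x)]].

Definition coll (lam : F) (x y : vec) : bool :=
  (pclass x != pclass y) && (bf lam x y == 0).

(* centric cube with center p: the points x_i^a are x (i, a) *)
Definition centric_cube (lam : F) (p : vec) (x : {ffun 'I_4 * 'I_2 -> vec}) : bool :=
  [&& p != 0, qf lam p != 0,
   [forall k, [&& x k != 0, qf lam (x k) == 0 & bf lam p (x k) != 0]],
   [forall k, forall l, (k != l) ==> (pclass (x k) != pclass (x l))],
   [forall k, forall l, coll lam (x k) (x l) == ((k.1 != l.1) && (k.2 != l.2))] &
   [forall i : 'I_4, exists al : F * F * F,
      (al != (0, 0, 0)) &&
      (al.1.1 *: p + al.1.2 *: x (i, ord0) + al.2 *: x (i, ord_max) == 0)]].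

(* the choice s of one point from each opposite pair gives a face:
   induced collinearity graph is a 4-cycle *)
Definition is_face (lam : F) (x : {ffun 'I_4 * 'I_2 -> vec}) (s : {ffun 'I_4 -> 'I_2}) : bool :=
  [exists sg : {perm 'I_4},
    let y := fun k : 'I_4 => x (sg k, s (sg k)) in
    [&& coll lam (y 0%R) (y 1%R), coll lam (y 1%R) (y 2%R),
        coll lam (y 2%R) (y 3%R), coll lam (y 3%R) (y 0%R),
        ~~ coll lam (y 0%R) (y 2%R) & ~~ coll lam (y 1%R) (y 3%R)]].

Definition face_set (x : {ffun 'I_4 * 'I_2 -> vec}) (s : {ffun 'I_4 -> 'I_2}) : {set {set vec}} :=
  [set pclass (x (i, s i)) | i : 'I_4].

Definition Iset (lam : F) (a b c d : vec) : {set {set vec}} :=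
  [set P | [exists p : vec,
     [&& p != 0, P == pclass p, qf lam p != 0,
         bf lam p a != 0, bf lam p b != 0, bf lam p c != 0, bf lam p d != 0 &
         [exists x : {ffun 'I_4 * 'I_2 -> vec},
            centric_cube lam p x &&
            [exists s : {ffun 'I_4 -> 'I_2},
               is_face lam x s &&
               (face_set x s == [set pclass a; pclass b; pclass c; pclass d])]]]]].

Definition Idesc (lam : F) : {set {set vec}} :=
  [set P | [exists u : F, exists v : F, exists r : F, exists s : F,
     [&& u * v != 0, r ^+ 2 + r * s + lam * s ^+ 2 == 1 &
         P == pclass (mkv u u^-1 v v^-1 r s)]]].

End Quadric.

(* A centre p of a centric cube lies on the line through each opposite pair
   {x_i^1, x_i^2}; such a line meets Q in just these two points, and the
   second is the image of the first under the symmetry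
   w |-> w + beta(p,w)/Q(p) p.  Opposite vertices a, c of a face carry the same
   label, so a is collinear with the partner of c, which gives
   Q(p) beta(a,c) = beta(p,a) beta(p,c); with b, d this yields
   Q(p) = p_1 p_2 = p_3 p_4 != 0.  Conversely, for such p the images of a, b,
   c, d under the symmetry complete the face to a centric cube.  Normalising
   Q(p) = 1 (every element of F_q is a square) gives the coordinates
   [u, 1/u, v, 1/v, r, s] with r^2 + rs + lam s^2 = 1; for Tr(lam) = 1 this
   binary form is anisotropic, so it takes the value 1 exactly q + 1 times. *)

From HB Require Import structures.
From mathcomp Require Import all_boot all_order all_algebra all_fingroup all_field.
From mathcomp Require Import ring zify.
Import GRing.Theory.
Local Open Scope ring_scope.
Set Implicit Arguments. Unset Strict Implicit.

Lemma addv_pchar2 (R : nzRingType) (V : lmodType R) (v : V) : 2 \in [pchar R] -> v + v = 0.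
Proof. by move=> pcharR2; rewrite -mulr2n -scaler_nat (pcharf0 pcharR2) scale0r. Qed.

Lemma oppv_pchar2 (R : nzRingType) (V : lmodType R) (v : V) : 2 \in [pchar R] -> - v = v.
Proof. by move=> pcharR2; apply/esym/eqP; rewrite -addr_eq0 addv_pchar2. Qed.

Section Char2Field.
Variable F : fieldType.
Hypothesis pcharF2 : 2 \in [pchar F].

Lemma sqrf_inj : injective (fun x : F => x ^+ 2).
Proof. exact: fmorph_inj (pFrobenius_aut pcharF2). Qed.

Lemma exprD_pchar2 (x y : F) i : (x + y) ^+ (2 ^ i) = x ^+ (2 ^ i) + y ^+ (2 ^ i).
Proof. by rewrite exprDn_pchar // pnatX (pnatE _ (isT : prime 2)) pcharF2. Qed.

End Char2Field.

Lemma sqrf_surj (F : finFieldType) : 2 \in [pchar F] -> forall y : F, exists x, x ^+ 2 = y.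
Proof.
move=> pcharF2 y; have [g _ gK] := injF_bij (sqrf_inj pcharF2).
by exists (g y); rewrite gK.
Qed.

Definition normf (F : fieldType) (lam r s : F) := r ^+ 2 + r * s + lam * s ^+ 2.

Lemma normfZ (F : fieldType) (lam c r s : F) :
  normf lam (c * r) (c * s) = c ^+ 2 * normf lam r s.
Proof. by rewrite /normf; ring. Qed.

Section Trace.
Variables (F : finFieldType) (n : nat).
Hypothesis cardF : #|F| = (2 ^ n)%N.

Lemma pchar_card2 : 2 \in [pchar F].
Proof. exact: card_finPcharP cardF (isT : prime 2). Qed.

Lemma trace_sqr_add (t : F) : trace n (t ^+ 2 + t) = 0.
Proof.
rewrite /trace (eq_bigr (fun i : 'I_n => t ^+ (2 ^ i.+1) - t ^+ (2 ^ i))) => [|i _].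
  by rewrite -(big_mkord xpredT (fun i => t ^+ (2 ^ i.+1) - t ^+ (2 ^ i)))
     telescope_sumr // -cardF expf_card subrr.
by rewrite exprD_pchar2 ?pchar_card2 // -exprM -expnS oppr_pchar2 ?pchar_card2.
Qed.

Section Anisotropic.
Variable lam : F.
Hypothesis trace_lam : trace n lam = 1.

Lemma normf_eq0 r s : (normf lam r s == 0) = (r == 0) && (s == 0).
Proof.
have two0 : 2%:R = 0 :> F := pcharf0 pchar_card2.
apply/idP/idP => [/eqP N0|/andP [/eqP -> /eqP ->]]; last by rewrite /normf; apply/eqP; ring.
have s0 : s = 0.
  apply/eqP; apply: contraT => sn0.
  have lamE : lam = (r / s) ^+ 2 + r / s.
    apply: (mulfI (expf_neq0 2 sn0)); rewrite -[LHS]add0r -N0 /normf.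
    by field: two0.
  by move: trace_lam; rewrite lamE trace_sqr_add => /eqP; rewrite eq_sym oner_eq0.
by move/eqP: N0; rewrite /normf s0 expr0n /= !(mulr0, addr0) expf_eq0 /= => ->; rewrite eqxx.
Qed.

(* (c, (r, s)) |-> (c r, c s) maps F^* x {normf = 1} bijectively onto F^2 minus 0. *)
Lemma card_normf_eq1 : #|[set rs : F * F | normf lam rs.1 rs.2 == 1]| = (#|F| + 1)%N.
Proof.
have pcharF2 := pchar_card2.
set S1 := [set rs : F * F | _].
pose scale (w : F * (F * F)) := (w.1 * w.2.1, w.1 * w.2.2).
have scale_inj : {in setX [set~ 0] S1 &, injective scale}.
  move=> [c [r s]] [c' [r' s']]; rewrite !inE /= => /andP [c0 /eqP N1] /andP [_ /eqP N1'] [e1 e2].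
  have cc' : c = c'.
    by apply: (sqrf_inj pcharF2); rewrite /= -[LHS]mulr1 -[RHS]mulr1 -{1}N1 -N1' -!normfZ e1 e2.
  by rewrite -cc' in e1 e2 *; rewrite (mulfI c0 e1) (mulfI c0 e2).
have scale_onto : scale @: setX [set~ 0] S1 = [set~ (0, 0)].
  apply/setP => -[x y]; rewrite !inE; apply/imsetP/idP.
  - move=> [[c [r s]]]; rewrite !inE /= => /andP [c0 /eqP N1] [-> ->].
    rewrite xpair_eqE !mulf_eq0 (negbTE c0) /= -normf_eq0 N1; exact: oner_neq0.
  - rewrite -[(x, y) == _]/((x == 0) && (y == 0)) -normf_eq0 => N0.
    have [c cE] := sqrf_surj pcharF2 (normf lam x y).
    have c0 : c != 0 by apply: contraNneq N0 => c0; rewrite -cE c0 expr0n.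
    exists (c, (x / c, y / c)); last by rewrite /scale /= ![c * _]mulrC !divfK.
    rewrite !inE /= c0 /=; apply/eqP/(mulfI (expf_neq0 2 c0)).
    by rewrite -normfZ ![c * _]mulrC !divfK // mulr1 cE.
have := card_in_imset scale_inj; rewrite scale_onto cardsX !cardsC1 card_prod.
have : (1 < #|F|)%N := finNzRing_gt1 F.
case: #|F| => [|[|q]] //= _; nia.
Qed.
End Anisotropic.
End Trace.

Section Coordinates.
Variable F : finFieldType.
Implicit Types (x y : 'rV[F]_6) (c : F).

Lemma coD x y k : co (x + y) k = co x k + co y k.
Proof. by rewrite /co mxE. Qed.

Lemma coZ c x k : co (c *: x) k = c * co x k.
Proof. by rewrite /co mxE. Qed.

Lemma co0 k : co (0 : 'rV[F]_6) k = 0.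
Proof. by rewrite /co mxE. Qed.

Lemma co_mkv (x0 x1 x2 x3 x4 x5 : F) k :
  (k < 6)%N -> co (mkv x0 x1 x2 x3 x4 x5) k = [:: x0; x1; x2; x3; x4; x5]`_k.
Proof. by move=> k6; rewrite /co mxE inordK. Qed.

Lemma co_inj x y : (forall k, (k < 6)%N -> co x k = co y k) -> x = y.
Proof. by move=> xy; apply/rowP => i; have := xy i (ltn_ord i); rewrite /co inord_val !ord1. Qed.

Lemma mkv_inj (x0 x1 x2 x3 x4 x5 y0 y1 y2 y3 y4 y5 : F) :
  mkv x0 x1 x2 x3 x4 x5 = mkv y0 y1 y2 y3 y4 y5 ->
  [:: x0; x1; x2; x3; x4; x5] = [:: y0; y1; y2; y3; y4; y5].
Proof.
move=> xy; apply: (@eq_from_nth _ 0) => // k k6.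
by have := congr1 (fun x => co x k) xy; rewrite !co_mkv.
Qed.

Lemma scale_mkv c (x0 x1 x2 x3 x4 x5 : F) :
  c *: mkv x0 x1 x2 x3 x4 x5 = mkv (c * x0) (c * x1) (c * x2) (c * x3) (c * x4) (c * x5).
Proof. by apply: co_inj => -[|[|[|[|[|[|//]]]]]] _; rewrite coZ !co_mkv. Qed.

End Coordinates.

Section ProjectivePoints.
Variable F : finFieldType.
Implicit Types (x y : 'rV[F]_6) (c : F).

Lemma pclass_id x : x \in pclass x.
Proof. by rewrite inE; apply/existsP; exists 1; rewrite oner_eq0 scale1r eqxx. Qed.

Lemma pclassP x y : pclass x = pclass y -> exists2 c, c != 0 & x = c *: y.
Proof.
move=> xy; have := pclass_id x; rewrite xy inE => /existsP [c /andP [c0 /eqP ->]].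
by exists c.
Qed.

Lemma pclassZ c x : c != 0 -> pclass (c *: x) = pclass x.
Proof.
move=> c0; apply/setP => y; rewrite !inE; apply/existsP/existsP => -[d /andP [d0 /eqP ->]].
  by exists (d * c); rewrite mulf_neq0 //= scalerA.
by exists (d / c); rewrite mulf_neq0 ?invr_eq0 //= scalerA divfK.
Qed.

End ProjectivePoints.

Section Forms.
Variables (F : finFieldType) (lam : F).
Local Notation Q := (qf lam).
Local Notation B := (bf lam).
Implicit Types (p w x y z : 'rV[F]_6) (c : F).

Lemma qfD x y : Q (x + y) = Q x + Q y + B x y.
Proof. by rewrite /bf; ring. Qed.

Lemma qfZ c x : Q (c *: x) = c ^+ 2 * Q x.
Proof. by rewrite /qf !coZ; ring. Qed.

Lemma qf0 : Q 0 = 0.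
Proof. by rewrite /qf !co0; ring. Qed.

Lemma bfC x y : B x y = B y x.
Proof. by rewrite /bf [x + y]addrC; ring. Qed.

Hypothesis pcharF2 : 2 \in [pchar F].
Let two0 : 2%:R = 0 :> F := pcharf0 pcharF2.

Lemma bfE x y :
  B x y = co x 0 * co y 1 + co x 1 * co y 0 + co x 2 * co y 3 + co x 3 * co y 2
          + co x 4 * co y 5 + co x 5 * co y 4.
Proof. by rewrite /bf /qf !coD; ring: two0. Qed.

Lemma bfDr x y z : B x (y + z) = B x y + B x z.
Proof. by rewrite !bfE !coD; ring. Qed.

Lemma bfZr c x y : B x (c *: y) = c * B x y.
Proof. by rewrite !bfE !coZ; ring. Qed.

Lemma bfxx x : B x x = 0.
Proof. by rewrite bfE; ring: two0. Qed.

Lemma bf0r x : B x 0 = 0.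
Proof. by rewrite -(scale0r 0) bfZr mul0r. Qed.

Lemma bfZl c x y : B (c *: x) y = c * B x y.
Proof. by rewrite bfC bfZr bfC. Qed.

Lemma pclass_neq_bf x y : B x y != 0 -> pclass x != pclass y.
Proof. by apply: contra => /eqP /pclassP [c _ ->]; rewrite bfZl bfxx mulr0. Qed.

(* The orthogonal symmetry in the hyperplane p^perp (a transvection, as char F = 2). *)
Definition reflection p w := w + (B p w / Q p) *: p.

Lemma reflection_add p w : w + reflection p w = (B p w / Q p) *: p.
Proof. by rewrite /reflection addrA addv_pchar2 // add0r. Qed.

Lemma bf_reflection p x w : B x (reflection p w) = B x w + B p w / Q p * B x p.
Proof. by rewrite bfDr bfZr. Qed.

Lemma bf_center_reflection p w : B p (reflection p w) = B p w.
Proof. by rewrite bf_reflection bfxx mulr0 addr0. Qed.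

Lemma qf_reflection p w : Q p != 0 -> Q (reflection p w) = Q w.
Proof.
move=> p0; rewrite qfD qfZ bfZr (bfC w p).
by field: two0.
Qed.

Lemma bf_reflections p v w : Q p != 0 -> B (reflection p v) (reflection p w) = B v w.
Proof.
move=> p0; rewrite bf_reflection (bfC _ w) (bfC _ p) !bf_reflection bfxx (bfC w v) (bfC w p).
by field: two0.
Qed.

End Forms.

Section Secants.
Variables (F : finFieldType) (lam : F).
Hypothesis pcharF2 : 2 \in [pchar F].
Local Notation Q := (qf lam).
Local Notation B := (bf lam).
Implicit Types (p x y z : 'rV[F]_6).

Lemma dependent_span p y z (al : F * F * F) :
  Q p != 0 -> Q y = 0 -> y != 0 -> al != (0, 0, 0) ->
  al.1.1 *: p + al.1.2 *: y + al.2 *: z = 0 ->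
  exists ab : F * F, z = ab.1 *: p + ab.2 *: y.
Proof.
case: al => [[a1 a2] a3] /= p0 y_iso y0 al0 dep.
have a3_0 : a3 != 0.
  apply: contraNneq al0 => a30; move: dep; rewrite a30 scale0r addr0 => /eqP.
  rewrite addr_eq0 -scaleNr => /eqP a1p.
  have /eqP : a1 ^+ 2 * Q p = 0 by rewrite -qfZ a1p qfZ y_iso mulr0.
  rewrite mulf_eq0 (negPf p0) orbF expf_eq0 /= => /eqP a10.
  move: a1p; rewrite a10 scale0r => /esym/eqP; rewrite scaler_eq0 oppr_eq0 (negPf y0) orbF.
  by move=> /eqP ->.
exists (a1 / a3, a2 / a3) => /=.
rewrite -[z](scalerK a3_0); move/eqP: dep; rewrite addrC addr_eq0 => /eqP ->.
by rewrite oppv_pchar2 // scalerDr !scalerA ![a3^-1 * _]mulrC.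
Qed.

Lemma secant_reflection p y z (ab : F * F) :
  Q p != 0 -> Q y = 0 -> Q z = 0 -> z != 0 -> pclass y != pclass z ->
  z = ab.1 *: p + ab.2 *: y -> pclass z = pclass (reflection lam p y).
Proof.
case: ab => [a b] /= p0 y_iso z_iso z0 yz zE.
have a0 : a != 0.
  apply: contraNneq yz => a0; apply/eqP; rewrite zE a0 scale0r add0r pclassZ //.
  by apply: contraNneq z0 => b0; rewrite zE a0 b0 !scale0r addr0.
have aE : a = b * (B p y / Q p).
  have /eqP : a * (a * Q p + b * B p y) = 0.
    by rewrite -z_iso zE qfD !qfZ bfZl // bfZr // y_iso; ring.
  rewrite mulf_eq0 (negPf a0) /= addr_eq0 oppr_pchar2 // => /eqP aQ.
  by apply: (mulIf p0); rewrite aQ; field.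
have b0 : b != 0 by apply: contraNneq a0 => b0; rewrite aE b0 mul0r.
by rewrite zE aE -scalerA -scalerDr pclassZ // addrC.
Qed.

End Secants.

Lemma ord2_cases (k : 'I_2) : k = ord0 \/ k = ord_max.
Proof. by case: k => [[|[|//]]] ?; [left | right]; apply: val_inj. Qed.

Section CentricCubes.
Variables (F : finFieldType) (lam : F).
Hypothesis pcharF2 : 2 \in [pchar F].
Local Notation Q := (qf lam).
Local Notation B := (bf lam).
Implicit Types (p e : 'rV[F]_6) (x : {ffun 'I_4 * 'I_2 -> 'rV[F]_6}).

Lemma centric_cubeP p x :
  reflect [/\ Q p != 0,
              forall k, [/\ x k != 0, Q (x k) = 0 & B p (x k) != 0],
              forall k l, k != l -> pclass (x k) != pclass (x l),
              forall k l, coll lam (x k) (x l) = (k.1 != l.1) && (k.2 != l.2) &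
              forall i, exists2 al : F * F * F, al != (0, 0, 0) &
                al.1.1 *: p + al.1.2 *: x (i, ord0) + al.2 *: x (i, ord_max) = 0]
          (centric_cube lam p x).
Proof.
apply: (iffP idP) => [|[p_aniso pts dist cl lines]].
  case/andP=> _ /and5P [p_aniso /forallP pts /forallP dist /forallP cl /forallP lines].
  split=> // [k|k l|k l|i].
  - by have /and3P [-> /eqP -> ->] := pts k.
  - by move/forallP: (dist k) => /(_ l) /implyP.
  - by move/forallP: (cl k) => /(_ l) /eqP.
  - by have /existsP [al /andP [al0 /eqP dep]] := lines i; exists al.
apply/andP; split.
  by apply: contraNneq p_aniso => ->; rewrite qf0.
apply/and5P; split=> //; apply/forallP => k.
- by have [-> -> ->] := pts k; rewrite eqxx.
- by apply/forallP => l; apply/implyP; apply: dist.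
- by apply/forallP => l; rewrite cl.
- by have [al al0 dep] := lines k; apply/existsP; exists al; rewrite al0 dep eqxx.
Qed.

Lemma cube_reflection p x i a b : centric_cube lam p x -> a != b ->
  pclass (x (i, b)) = pclass (reflection lam p (x (i, a))).
Proof.
case/centric_cubeP => p_aniso pts dist _ lines ab.
have [y0 y_iso _] := pts (i, a); have [z0 z_iso _] := pts (i, b).
have [al al0 dep] : exists2 al : F * F * F, al != (0, 0, 0) &
    al.1.1 *: p + al.1.2 *: x (i, a) + al.2 *: x (i, b) = 0.
  have [al al0 dep] := lines i.
  case: (ord2_cases a) (ord2_cases b) ab => -> [->|->]; rewrite ?eqxx // => _.
  exists (al.1.1, al.2, al.1.2); last by rewrite addrAC.
  by move: al0 {dep}; case: al => [[? ?] ?]; apply: contra => /eqP [-> -> ->].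
have [ab' zE] := dependent_span pcharF2 p_aniso y_iso y0 al0 dep.
by apply: (secant_reflection pcharF2 p_aniso) zE; rewrite // dist // xpair_eqE eqxx.
Qed.

Lemma cube_opposite_bf p x i j a : centric_cube lam p x -> i != j ->
  Q p * B (x (i, a)) (x (j, a)) = B p (x (i, a)) * B p (x (j, a)).
Proof.
move=> cube ij; have [b ab] : exists b, a != b.
  by case: (ord2_cases a) => ->; [exists ord_max | exists ord0].
have /centric_cubeP [p_aniso _ _ cl _] := cube.
have [c c0 xE] := pclassP (cube_reflection j cube ab).
have /andP [_ /eqP] : coll lam (x (i, a)) (x (j, b)) by rewrite cl /= ij.
rewrite xE bfZr // => /eqP; rewrite mulf_eq0 (negPf c0) /= bf_reflection // (bfC _ _ p).
rewrite addr_eq0 oppr_pchar2 // => /eqP ->.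
by field.
Qed.

Lemma face_pair_bf p x s e e' : centric_cube lam p x ->
  pclass e \in face_set x s -> pclass e' \in face_set x s -> B e e' != 0 ->
  Q p * B e e' = B p e * B p e'.
Proof.
move=> cube /imsetP [i _ eE] /imsetP [j _ e'E] ee'.
have /centric_cubeP [_ _ _ cl _] := cube.
have [c c0 {}eE] := pclassP eE; have [c' c'0 {}e'E] := pclassP e'E.
have ij : i != j.
  apply: contraNneq (pclass_neq_bf pcharF2 ee') => ij.
  by rewrite eE e'E !pclassZ // ij.
have sij : s i = s j.
  apply/eqP; apply: contraNT ee' => sij.
  have /andP [_ /eqP] : coll lam (x (i, s i)) (x (j, s j)) by rewrite cl /= ij.
  by rewrite eE e'E bfZl // bfZr // => ->; rewrite !mulr0.
rewrite eE e'E !bfZl // !bfZr // sij.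
transitivity (c * c' * (Q p * B (x (i, s j)) (x (j, s j)))); first by ring.
by rewrite cube_opposite_bf //; ring.
Qed.

End CentricCubes.

Lemma exists_other (T : finType) (i j : T) : (2 < #|T|)%N -> exists m, (m != i) && (m != j).
Proof.
move=> T3; have /set0Pn [m] : ~: [set i; j] != set0.
  by rewrite -card_gt0 cardsCs setCK cards2 subn_gt0 (leq_ltn_trans _ T3) //; case: (i != j).
by rewrite !inE negb_or; exists m.
Qed.

Definition opposite (i j : 'I_4) := (i != j) && (odd i == odd j).

Lemma oppositeC i j : opposite i j = opposite j i.
Proof. by rewrite /opposite eq_sym [odd i == _]eq_sym. Qed.

Definition parity (i : 'I_4) : 'I_2 := if odd i then ord_max else ord0.

Lemma parity_adjacency (k l : 'I_4 * 'I_2) :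
  (((k.2 == parity k.1) == (l.2 == parity l.1)) == opposite k.1 l.1)
  = ((k.1 == l.1) != (k.2 == l.2)).
Proof.
by case: k l => [[[|[|[|[|//]]]] ?] [[|[|//]] ?]] [[[|[|[|[|//]]]] ?] [[|[|//]] ?]].
Qed.

Section FaceCube.
Variables (F : finFieldType) (lam : F).
Hypothesis pcharF2 : 2 \in [pchar F].
Local Notation Q := (qf lam).
Local Notation B := (bf lam).
Implicit Types (p : 'rV[F]_6) (x : {ffun 'I_4 * 'I_2 -> 'rV[F]_6}).

Lemma bf_adjacency x :
  (forall k l, (B (x k) (x l) != 0) = ((k.1 == l.1) != (k.2 == l.2))) ->
  (forall k l, k != l -> pclass (x k) != pclass (x l)) /\
  (forall k l, coll lam (x k) (x l) = (k.1 != l.1) && (k.2 != l.2)).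
Proof.
move=> adj; have dist k l : k != l -> pclass (x k) != pclass (x l).
  case: k l => [i a] [j b]; rewrite xpair_eqE => kl.
  have [|xkl] := boolP (B (x (i, a)) (x (j, b)) != 0); first exact: pclass_neq_bf.
  have [ij ab] : i != j /\ a != b.
    by move: xkl kl; rewrite adj; case: (i == j); case: (a == b).
  have [m /andP [mi mj]] : exists m, (m != i) && (m != j) by apply: exists_other; rewrite card_ord.
  apply/negP => /eqP /pclassP [c _ xE].
  have := adj (m, a) (i, a); have := adj (m, a) (j, b).
  rewrite /= xE bfZr // (negPf mi) (negPf mj) (negPf ab) /= => /negbFE /eqP ->.
  by rewrite mulr0 !eqxx.
split=> // k l; rewrite /coll; have [<-|kl] := eqVneq k l; first by rewrite !eqxx.
rewrite dist //= -[_ == 0]negbK adj.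
by case: k l kl => [i a] [j b]; rewrite xpair_eqE /=; case: (i == j); case: (a == b).
Qed.

(* Q(p) = beta(p,a) beta(p,c) = beta(p,b) beta(p,d) != 0, cf. bf_center_quad. *)
Definition face_center p := [&& Q p != 0, Q p == co p 0 * co p 1 & Q p == co p 2 * co p 3].

Definition quad (i : 'I_4) : 'rV[F]_6 :=
  [:: mkv 1 0 0 0 0 0; mkv 0 0 1 0 0 0; mkv 0 1 0 0 0 0; mkv 0 0 0 1 0 0]`_i.

Lemma qf_quad i : Q (quad i) = 0.
Proof. by case: i => [[|[|[|[|//]]]] ?]; rewrite /qf !co_mkv //=; ring. Qed.

Lemma bf_quad i j : B (quad i) (quad j) = (opposite i j)%:R.
Proof.
by case: i j => [[|[|[|[|//]]]] ?] [[|[|[|[|//]]]] ?]; rewrite bfE // !co_mkv //=; ring.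
Qed.

Lemma bf_center_quad p i : B p (quad i) = co p (nth 0 [:: 1; 3; 0; 2] i)%N.
Proof. by case: i => [[|[|[|[|//]]]] ?]; rewrite bfE // !co_mkv //=; ring. Qed.

Lemma quads_set : [set pclass (quad i) | i : 'I_4] =
  [set pclass (mkv 1 0 0 0 0 0); pclass (mkv 0 0 1 0 0 0);
       pclass (mkv 0 1 0 0 0 0); pclass (mkv 0 0 0 1 0 0)].
Proof.
apply/setP => P; apply/imsetP/idP => [[i _ ->]|]; rewrite !inE.
  by case: i => [[|[|[|[|//]]]] ?]; rewrite eqxx ?orbT.
by rewrite -!orbA => /or4P [] /eqP ->; [exists (@Ordinal 4 0 isT) | exists (@Ordinal 4 1 isT)
  | exists (@Ordinal 4 2 isT) | exists (@Ordinal 4 3 isT)].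
Qed.

Lemma cube_face_center p x s : centric_cube lam p x ->
  face_set x s = [set pclass (quad i) | i : 'I_4] -> face_center p.
Proof.
move=> cube fs; have /centric_cubeP [p0 _ _ _ _] := cube.
have opp_rel i j : opposite i j -> Q p = B p (quad i) * B p (quad j).
  move=> ij; have mem k : pclass (quad k) \in face_set x s by rewrite fs; apply/imsetP; exists k.
  have := face_pair_bf pcharF2 cube (mem i) (mem j); rewrite bf_quad ij mulr1.
  by apply; rewrite oner_eq0.
apply/and3P; split=> //; apply/eqP.
  by rewrite (opp_rel (@Ordinal 4 2 isT) (@Ordinal 4 0 isT)) // !bf_center_quad.
by rewrite (opp_rel (@Ordinal 4 3 isT) (@Ordinal 4 1 isT)) // !bf_center_quad.
Qed.

(* The face is {x (i, parity i)}: labels must alternate along the 4-cycle a b c d. *)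
Definition face_cube p : {ffun 'I_4 * 'I_2 -> 'rV[F]_6} :=
  [ffun k => if k.2 == parity k.1 then quad k.1 else reflection lam p (quad k.1)].

Section Center.
Variable p : 'rV[F]_6.
Hypothesis center : face_center p.

Lemma bf_center_quad_neq0 i : B p (quad i) != 0.
Proof.
move: center => /and3P [p0 /eqP Q01 /eqP Q23]; rewrite bf_center_quad.
case: i => [[|[|[|[|//]]]] ?] /=; apply: contraNneq p0 => pi0;
  [rewrite Q01 | rewrite Q23 | rewrite Q01 | rewrite Q23]; by rewrite pi0 ?(mulr0, mul0r).
Qed.

Lemma bf_center_opposite i j : opposite i j -> B p (quad i) * B p (quad j) = Q p.
Proof.
move: center => /and3P [_ /eqP Q01 /eqP Q23]; rewrite !bf_center_quad.
by case: i j => [[|[|[|[|//]]]] ?] [[|[|[|[|//]]]] ?] //= _;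
  rewrite ?[co p 1 * _]mulrC ?[co p 3 * _]mulrC -?Q01 -?Q23.
Qed.

Lemma bf_quad_reflection i j :
  (B (quad i) (reflection lam p (quad j)) != 0) = ~~ opposite i j.
Proof.
have p0 : Q p != 0 by case/andP: center.
rewrite bf_reflection // bf_quad (bfC _ _ p) mulrAC.
have [ij|nij] := boolP (opposite i j).
  by rewrite [B p (quad j) * _]mulrC bf_center_opposite // divff // addrr_pchar2 ?eqxx.
by rewrite add0r !mulf_neq0 ?invr_eq0 ?bf_center_quad_neq0.
Qed.

Lemma bf_face_cube k l :
  (B (face_cube p k) (face_cube p l) != 0) = ((k.1 == l.1) != (k.2 == l.2)).
Proof.
have p0 : Q p != 0 by case/andP: center.
rewrite -parity_adjacency !ffunE.
case: ifP => _; case: ifP => _.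
- by rewrite bf_quad; case: opposite; rewrite ?mulr1n ?mulr0n ?oner_eq0 ?eqxx.
- by rewrite bf_quad_reflection; case: opposite.
- by rewrite bfC bf_quad_reflection oppositeC; case: opposite.
- by rewrite bf_reflections // bf_quad; case: opposite; rewrite ?mulr1n ?mulr0n ?oner_eq0 ?eqxx.
Qed.

Lemma face_cube_coll k l :
  coll lam (face_cube p k) (face_cube p l) = (k.1 != l.1) && (k.2 != l.2).
Proof. exact: (bf_adjacency bf_face_cube).2. Qed.

Lemma face_cube_centric : centric_cube lam p (face_cube p).
Proof.
have p0 : Q p != 0 by case/andP: center.
apply/centric_cubeP; split=> // [k|k l|k l|i].
- have Bk : B p (face_cube p k) != 0.
    by rewrite ffunE; case: ifP => _; rewrite ?bf_center_reflection // bf_center_quad_neq0.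
  split=> //; last by rewrite ffunE; case: ifP => _; rewrite ?qf_reflection // qf_quad.
  by apply: contraNneq Bk => ->; rewrite bf0r.
- exact: (bf_adjacency bf_face_cube).1.
- exact: face_cube_coll.
exists (B p (quad i) / Q p, 1, 1); first by rewrite !xpair_eqE oner_eq0 !andbF.
rewrite /= !scale1r !ffunE /parity; case: odd => /=.
  by rewrite addrAC -addrA addrC reflection_add // addv_pchar2.
by rewrite -addrA reflection_add // addv_pchar2.
Qed.

Lemma face_cube_face : is_face lam (face_cube p) [ffun i => parity i].
Proof. by apply/existsP; exists 1%g; rewrite /= !perm1 !face_cube_coll !ffunE. Qed.

Lemma face_set_face_cube :
  face_set (face_cube p) [ffun i => parity i] = [set pclass (quad i) | i : 'I_4].
Proof. by apply: eq_imset => i; rewrite !ffunE eqxx. Qed.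

Lemma face_center_Iset : pclass p \in
  Iset lam (mkv 1 0 0 0 0 0) (mkv 0 0 1 0 0 0) (mkv 0 1 0 0 0 0) (mkv 0 0 0 1 0 0).
Proof.
have p_aniso : Q p != 0 by case/andP: center.
have p0 : p != 0 by apply: contraNneq p_aniso => ->; rewrite qf0.
have Bq := bf_center_quad_neq0.
rewrite inE; apply/existsP; exists p.
rewrite p0 eqxx p_aniso (Bq (@Ordinal 4 0 isT)) (Bq (@Ordinal 4 1 isT)).
rewrite (Bq (@Ordinal 4 2 isT)) (Bq (@Ordinal 4 3 isT)) /=.
apply/existsP; exists (face_cube p); rewrite face_cube_centric /=.
by apply/existsP; exists [ffun i => parity i]; rewrite face_cube_face face_set_face_cube quads_set eqxx.
Qed.

End Center.

End FaceCube.

Section Characterization.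
Variables (F : finFieldType) (lam : F).
Hypothesis pcharF2 : 2 \in [pchar F].
Local Notation Q := (qf lam).

Lemma Iset_face_centerP P :
  reflect (exists2 p, face_center lam p & P = pclass p)
          (P \in Iset lam (mkv 1 0 0 0 0 0) (mkv 0 0 1 0 0 0) (mkv 0 1 0 0 0 0) (mkv 0 0 0 1 0 0)).
Proof.
apply: (iffP idP) => [|[p center ->]]; last exact: face_center_Iset.
rewrite inE => /existsP [p /and4P [_ /eqP -> _ /and5P [_ _ _ _ /existsP [x]]]].
case/andP => cube /existsP [s /andP [_ /eqP fs]].
rewrite -quads_set in fs; by exists p => //; exact: (cube_face_center pcharF2 cube fs).
Qed.

Lemma Idesc_face_centerP P :
  reflect (exists2 p, face_center lam p & P = pclass p) (P \in Idesc lam).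
Proof.
have two0 : 2%:R = 0 :> F := pcharf0 pcharF2.
apply: (iffP idP) => [|[p /and3P [p0 /eqP Q01 /eqP Q23] ->]].
  rewrite inE => /existsP [u /existsP [v /existsP [r /existsP [s /and3P [uv0 N1 /eqP ->]]]]].
  rewrite mulf_eq0 negb_or in uv0; case/andP: uv0 => u0 v0.
  have Q1 : Q (mkv u u^-1 v v^-1 r s) = 1.
    by rewrite /qf !co_mkv //= !mulfV // -[RHS](eqP N1); ring: two0.
  by eexists; last reflexivity; rewrite /face_center Q1 !co_mkv //= !mulfV ?oner_eq0 ?eqxx.
have [c cE] := sqrf_surj pcharF2 (Q p)^-1.
have cQ : c ^+ 2 * Q p = 1 by rewrite cE mulVf.
have c0 : c != 0.
  by apply/eqP => c0; move: cQ; rewrite c0 expr0n mul0r => /eqP; rewrite eq_sym oner_eq0.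
have inv k l : Q p = co p k * co p l -> (c * co p k)^-1 = c * co p l.
  by move=> Qkl; apply: mulr1_eq; rewrite -cQ Qkl; ring.
rewrite inE; apply/existsP; exists (c * co p 0); apply/existsP; exists (c * co p 2).
apply/existsP; exists (c * co p 4); apply/existsP; exists (c * co p 5).
apply/and3P; split.
- have pk0 k l : Q p = co p k * co p l -> co p k != 0.
    by move=> Qkl; apply: contraNneq p0 => pk0; rewrite Qkl pk0 mul0r.
  by rewrite !mulf_neq0 // (pk0 _ _ Q01, pk0 _ _ Q23).
- have N1 := cQ; rewrite {1}/qf -Q01 -Q23 in N1.
  by apply/eqP; rewrite -[RHS]N1; ring: two0.
rewrite -(pclassZ p c0) (inv _ _ Q01) (inv _ _ Q23); apply/eqP; congr pclass.
by apply: co_inj => -[|[|[|[|[|[|//]]]]]] _; rewrite co_mkv // coZ.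
Qed.

Lemma Iset_eq_Idesc :
  Iset lam (mkv 1 0 0 0 0 0) (mkv 0 0 1 0 0 0) (mkv 0 1 0 0 0 0) (mkv 0 0 0 1 0 0) = Idesc lam.
Proof. by apply/setP => P; apply/Iset_face_centerP/Idesc_face_centerP. Qed.

End Characterization.

Lemma card_Idesc (F : finFieldType) n (lam : F) : #|F| = (2 ^ n)%N -> trace n lam = 1 ->
  #|Idesc lam| = ((#|F| - 1) ^ 2 * (#|F| + 1))%N.
Proof.
move=> cardF trace_lam; have pcharF2 := pchar_card2 cardF.
set A := [set uv : F * F | uv.1 * uv.2 != 0].
set S1 := [set rs : F * F | normf lam rs.1 rs.2 == 1].
pose g (w : (F * F) * (F * F)) := pclass (mkv w.1.1 w.1.1^-1 w.1.2 w.1.2^-1 w.2.1 w.2.2).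
have -> : Idesc lam = g @: setX A S1.
  apply/setP => P; rewrite inE; apply/idP/imsetP.
    move=> /existsP [u /existsP [v /existsP [r /existsP [s /and3P [uv N1 /eqP ->]]]]].
    by exists ((u, v), (r, s)); rewrite // !inE /= uv.
  move=> [[[u v] [r s]]]; rewrite !inE /= => /andP [uv N1] ->.
  apply/existsP; exists u; apply/existsP; exists v.
  by apply/existsP; exists r; apply/existsP; exists s; rewrite uv N1 eqxx.
have g_inj : {in setX A S1 &, injective g}.
  move=> [[u v] [r s]] [[u' v'] [r' s']]; rewrite !inE /= !mulf_eq0 !negb_or.
  move=> /andP [/andP [u0 _] _] /andP [/andP [u'0 _] _].
  move=> /pclassP [c _]; rewrite scale_mkv => /mkv_inj [uE uVE vE _ rE sE].
  have c1 : c = 1.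
    apply: (sqrf_inj pcharF2); rewrite /= expr1n -(mulfV u0) {1}uE uVE.
    by field.
  by rewrite uE vE rE sE c1 !mul1r.
rewrite (card_in_imset g_inj) cardsX (card_normf_eq1 cardF trace_lam).
have -> : A = setX [set~ (0 : F)] [set~ 0] by apply/setP => -[u v]; rewrite !inE mulf_eq0 negb_or.
by rewrite cardsX !cardsC1 mulnn subn1.
Qed.

Theorem lemma3p6 (F : finFieldType) (n : nat) (lam : F) :
  #|F| = (2 ^ n)%N -> trace n lam = 1 ->
  let a := mkv 1 0 0 0 0 0 in
  let b := mkv 0 0 1 0 0 0 in
  let c := mkv 0 1 0 0 0 0 in
  let d := mkv 0 0 0 1 0 0 in
  Iset lam a b c d = Idesc lam /\
  #|Iset lam a b c d| = ((#|F| - 1) ^ 2 * (#|F| + 1))%N.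
Proof.
move=> cardF trace_lam /=.
rewrite Iset_eq_Idesc ?(pchar_card2 cardF) //.
by split=> //; apply: card_Idesc cardF trace_lam.
Qed.
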